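(* Let $(G,\sigma)$ be a finite connected signed graph satisfying $CD^{\sigma}(K,N)$ for some $K\in\mathbb{R}$ and $N\in(0,\infty]$. Let $f:V\to\mathbb{R}$ be an eigenfunction of the signed Laplacian $\Delta^{\sigma}$ to a nonzero eigenvalue $\lambda^{\sigma}$, i.e. $-\Delta^\sigma f=\lambda^\sigma f$. Then for all $x\in V$ and all $\alpha>2-2K/\lambda^{\sigma}$, \[ |\nabla^{\sigma}f|^{2}(x)+\alpha\lambda^{\sigma} f^{2}(x)\leq\frac{(\alpha^{2}-\frac{4}{N})\lambda^{\sigma}+2K\alpha}{(\alpha-2)\lambda^{\sigma}+2K}\,\lambda^{\sigma}\cdot \max_{z\in V}f^{2}(z), \] with the convention $\frac1N=0$ if $N=\infty$.
   Context: $G=(V,E)$ is a finite simple connected graph; $x\sim y$ means $\{x,y\}\in E$; $d_x$ is the degree of $x$. A sign is a map $\sigma:E\to\{-1,+1\}$, $\sigma_{xy}:=\sigma(\{x,y\})$; $(G,\sigma)$ is a signed graph. The signed Laplacian is $\Delta^{\sigma}f(x)=\frac{1}{d_x}\sum_{y\sim x}(\sigma_{xy}f(y)-f(x))$, and $\Delta$ denotes the same operator with $\sigma\equiv+1$. For $f,g:V\to\mathbb{R}$: $\Gamma^{\sigma}(f,g)=\frac12\{\Delta(fg)-g\Delta^{\sigma}f-f\Delta^{\sigma}g\}$, $\Gamma_2^{\sigma}(f,g)=\frac12\{\Delta\Gamma^{\sigma}(f,g)-\Gamma^{\sigma}(g,\Delta^{\sigma}f)-\Gamma^{\sigma}(f,\Delta^{\sigma}g)\}$,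 $\Gamma^\sigma(f)=\Gamma^\sigma(f,f)$, $\Gamma_2^\sigma(f)=\Gamma_2^\sigma(f,f)$, and $|\nabla^{\sigma}f|^2(x):=2\Gamma^\sigma(f)(x)=\frac{1}{d_x}\sum_{y\sim x}(\sigma_{xy}f(y)-f(x))^2$. $(G,\sigma)$ satisfies $CD^{\sigma}(K,N)$ ($K\in\mathbb{R}$, $N\in(0,\infty]$) if $\Gamma_2^{\sigma}(f)(x)\ge\frac1N(\Delta^\sigma f)^2(x)+K\Gamma^\sigma(f)(x)$ for all $f:V\to\mathbb{R}$ and all $x\in V$ (with $\frac1N=0$ for $N=\infty$). *)

From HB Require Import structures.
From mathcomp Require Import all_boot all_order all_algebra.
From mathcomp Require Import constructive_ereal.
Set Implicit Arguments. Unset Strict Implicit. Unset Printing Implicit Defensive.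
Import Order.TTheory GRing.Theory Num.Theory.
Local Open Scope ring_scope.

Section SignedGraph.
Variables (R : realFieldType) (T : finType) (e : rel T).

Definition deg (x : T) : R := (#|[set y | e x y]|)%:R.

Definition slap (sigma : T -> T -> R) (f : T -> R) (x : T) : R :=
  (deg x)^-1 * \sum_(y | e x y) (sigma x y * f y - f x).

Definition lap (f : T -> R) (x : T) : R := slap (fun _ _ => 1) f x.

Definition sGamma (sigma : T -> T -> R) (f g : T -> R) (x : T) : R :=
  2^-1 * (lap (fun z => f z * g z) x - g x * slap sigma f x - f x * slap sigma g x).

Definition sGamma2 (sigma : T -> T -> R) (f g : T -> R) (x : T) : R :=
  2^-1 * (lap (sGamma sigma f g) x - sGamma sigma g (slap sigma f) x
          - sGamma sigma f (slap sigma g) x).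

Definition sgrad2 (sigma : T -> T -> R) (f : T -> R) (x : T) : R :=
  2 * sGamma sigma f f x.

Definition invN (N : \bar R) : R :=
  match N with EFin r => r^-1 | _ => 0 end.

Definition CDs (sigma : T -> T -> R) (K : R) (N : \bar R) : Prop :=
  forall (f : T -> R) (x : T),
    invN N * (slap sigma f x) ^+ 2 + K * sGamma sigma f f x
      <= sGamma2 sigma f f x.

Definition simple_connected_graph : Prop :=
  [/\ symmetric e, irreflexive e & forall x y : T, connect e x y].

(* signature σ : E -> {±1}, represented as a symmetric function on edges *)
Definition signature (sigma : T -> T -> R) : Prop :=
  forall x y, e x y -> sigma x y = sigma y x /\ (sigma x y = 1 \/ sigma x y = -1).

End SignedGraph.

From HB Require Import structures.
From mathcomp Require Import all_boot all_order all_algebra.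
From mathcomp Require Import constructive_ereal ring lra.
Set Implicit Arguments. Unset Strict Implicit. Unset Printing Implicit Defensive.
Import Order.TTheory GRing.Theory Num.Theory.
Local Open Scope ring_scope.

(* Set F := |∇^σ f|^2 + α λ f^2 and let x0 be a maximum point of F, so that
   ΔF(x0) <= 0.  For an eigenfunction, Δ Γ^σ(f) = 2 Γ_2^σ(f) - 2 λ Γ^σ(f) and
   Δ(f^2) = 2 Γ^σ(f) - 2 λ f^2; inserting CD^σ(K,N) at x0 bounds F(x0) by a
   multiple of f(x0)^2.  That multiple is nonnegative because λ > 0 and
   K <= λ (1 - 1/N), which follow by integrating Δ(f^2) and Δ Γ^σ(f) against
   the degree measure, where Σ_x d_x Δg(x) = 0. *)

Section SignedLaplacian.
Variables (R : realFieldType) (T : finType) (e : rel T).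

Lemma deg_ge0 x : 0 <= deg R e x.
Proof. exact: ler0n. Qed.

Lemma mul_deg_slap sigma (g : T -> R) x :
  deg R e x * slap e sigma g x = \sum_(y | e x y) (sigma x y * g y - g x).
Proof.
rewrite /slap; have [d0|dN0] := eqVneq (deg R e x) 0; last first.
  by rewrite mulrA mulfV ?mul1r.
rewrite d0 mul0r big_pred0 // => y; apply/negbTE/negP => exy.
move/eqP: d0; rewrite /deg pnatr_eq0 cards_eq0 => /eqP/setP/(_ y).
by rewrite !inE exy.
Qed.

Lemma eq_slap sigma (g h : T -> R) x :
  (forall z, g z = h z) -> slap e sigma g x = slap e sigma h x.
Proof. by move=> gh; rewrite /slap; congr (_ * _); apply: eq_bigr => y _; rewrite !gh. Qed.

Lemma slap_lincomb sigma a b (g h : T -> R) x :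
  slap e sigma (fun z => a * g z + b * h z) x
  = a * slap e sigma g x + b * slap e sigma h x.
Proof.
rewrite /slap (_ : \sum_(y | e x y) _ = a * \sum_(y | e x y) (sigma x y * g y - g x)
   + b * \sum_(y | e x y) (sigma x y * h y - h x)); first ring.
by rewrite !mulr_sumr -big_split; apply: eq_bigr => y _ /=; ring.
Qed.

Lemma slapZ sigma c (g : T -> R) x :
  slap e sigma (fun z => c * g z) x = c * slap e sigma g x.
Proof.
rewrite (@eq_slap _ _ (fun z => c * g z + 0 * g z)) => [|z]; last by ring.
by rewrite slap_lincomb mul0r addr0.
Qed.

Lemma sum_deg_lap (g : T -> R) : symmetric e -> \sum_x deg R e x * lap e g x = 0.
Proof.
move=> sym_e; under eq_bigr do rewrite /lap mul_deg_slap big_mkcond /=.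
set A := \sum_x _; suff : A = - A by lra.
rewrite {1}/A exchange_big /= -sumrN; apply: eq_bigr => y _.
rewrite -sumrN; apply: eq_bigr => x _.
by rewrite sym_e; case: (e y x); rewrite ?oppr0 // !mul1r opprB.
Qed.

Lemma sgrad2E sigma (f : T -> R) x : signature e sigma ->
  sgrad2 e sigma f x
  = (deg R e x)^-1 * \sum_(y | e x y) (sigma x y * f y - f x) ^+ 2.
Proof.
move=> sig; rewrite /sgrad2 /sGamma /lap /slap.
set d := (deg R e x)^-1.
rewrite (_ : 2 * _ = d * (\sum_(y | e x y) (1 * (f y * f y) - f x * f x)
     - 2 * f x * \sum_(y | e x y) (sigma x y * f y - f x))); last by field.
rewrite mulr_sumr -sumrB; congr (_ * _); apply: eq_bigr => y exy.
by have [_ [->|->]] := sig x y exy; ring.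
Qed.

Lemma sGamma_ge0 sigma (f : T -> R) x : signature e sigma -> 0 <= sGamma e sigma f f x.
Proof.
move=> /(sgrad2E f x); rewrite /sgrad2 => grad2E.
suff : 0 <= 2 * sGamma e sigma f f x by rewrite pmulr_rge0.
rewrite grad2E mulr_ge0 ?invr_ge0 ?deg_ge0 // sumr_ge0 // => y _.
exact: sqr_ge0.
Qed.

Lemma lap_le0_at_max (g : T -> R) x : (forall y, g y <= g x) -> lap e g x <= 0.
Proof.
move=> g_max; rewrite /lap /slap mulr_ge0_le0 ?invr_ge0 ?deg_ge0 //.
by rewrite sumr_le0 // => y _; rewrite mul1r subr_le0.
Qed.

End SignedLaplacian.

Lemma invN_ge0 (R : realFieldType) (N : \bar R) : (0 < N)%E -> 0 <= invN N.
Proof. by case: N => [r|//|//]; rewrite lte_fin => /ltW; rewrite /= invr_ge0. Qed.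

Section Eigenfunction.
Variables (R : realFieldType) (T : finType) (e : rel T) (sigma : T -> T -> R).
Variables (f : T -> R) (lam : R).
Hypothesis slap_f : forall x, slap e sigma f x = - lam * f x.

Local Notation Gf := (sGamma e sigma f f).
Local Notation Gf2 := (sGamma2 e sigma f f).

Lemma sGamma_slap_eigen x : sGamma e sigma f (slap e sigma f) x = - lam * Gf x.
Proof.
rewrite /sGamma (eq_slap e sigma _ slap_f) slapZ /lap.
rewrite (@eq_slap _ _ _ _ _ (fun z => - lam * (f z * f z))) => [|z]; last first.
  by rewrite slap_f; ring.
by rewrite slapZ slap_f; ring.
Qed.

Lemma lap_sGamma_eigen x : lap e Gf x = 2 * Gf2 x - 2 * lam * Gf x.
Proof. by rewrite /sGamma2 sGamma_slap_eigen; field. Qed.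

Lemma lap_sq_eigen x : lap e (fun z => f z * f z) x = 2 * Gf x - 2 * lam * f x ^+ 2.
Proof. by rewrite /sGamma slap_f; field. Qed.

Lemma eigen_gradient_bound_at K N alpha x :
  CDs e sigma K N ->
  lap e (fun z => sgrad2 e sigma f z + alpha * lam * f z ^+ 2) x <= 0 ->
  (sgrad2 e sigma f x + alpha * lam * f x ^+ 2) * ((alpha - 2) * lam + 2 * K)
    <= lam * f x ^+ 2 * ((alpha ^+ 2 - 4 * invN N) * lam + 2 * K * alpha).
Proof.
move=> CD; have -> : lap e (fun z => sgrad2 e sigma f z + alpha * lam * f z ^+ 2) x
    = 2 * lap e Gf x + alpha * lam * lap e (fun z => f z * f z) x.
  rewrite /lap -slap_lincomb; apply: eq_slap => z; rewrite /sgrad2; ring.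
rewrite lap_sGamma_eigen lap_sq_eigen => lapF_le0.
have := CD f x; rewrite slap_f /sgrad2 => CDx.
(* sum of ΔF(x) <= 0 and four times the CD inequality at x *)
nra.
Qed.

Hypothesis sym_e : symmetric e.

Lemma sum_deg_sGamma_eigen :
  \sum_x deg R e x * Gf x = lam * \sum_x deg R e x * f x ^+ 2.
Proof.
have := sum_deg_lap (fun z => f z * f z) sym_e.
rewrite (eq_bigr (fun x => 2 * (deg R e x * Gf x) - 2 * lam * (deg R e x * f x ^+ 2)));
  last by move=> x _; rewrite lap_sq_eigen; ring.
by rewrite sumrB -!mulr_sumr; lra.
Qed.

Lemma sum_deg_sGamma2_eigen :
  \sum_x deg R e x * Gf2 x = lam ^+ 2 * \sum_x deg R e x * f x ^+ 2.
Proof.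
have := sum_deg_lap Gf sym_e.
rewrite (eq_bigr (fun x => 2 * (deg R e x * Gf2 x) - 2 * lam * (deg R e x * Gf x)));
  last by move=> x _; rewrite lap_sGamma_eigen; ring.
rewrite sumrB -!mulr_sumr sum_deg_sGamma_eigen => sum0.
by rewrite expr2 -mulrA; lra.
Qed.

Hypotheses (sig : signature e sigma) (f_neq0 : exists z, f z != 0) (lam_neq0 : lam != 0).

Lemma sum_deg_sq_gt0 : 0 < \sum_x deg R e x * f x ^+ 2.
Proof.
have [z fz] := f_neq0.
have dz : 0 < deg R e z.
  rewrite lt_def deg_ge0 andbT; apply/negP => /eqP d0.
  have := slap_f z; rewrite /slap d0 invr0 mul0r => /esym/eqP.
  by rewrite mulf_eq0 oppr_eq0 (negbTE lam_neq0) (negbTE fz).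
rewrite (bigD1 z) //=; apply: (@lt_le_trans _ _ (deg R e z * f z ^+ 2)).
  by rewrite mulr_gt0 // lt_def sqr_ge0 andbT sqrf_eq0.
rewrite lerDl sumr_ge0 // => y _; exact: mulr_ge0 (deg_ge0 _ e _) (sqr_ge0 _).
Qed.

Lemma eigenvalue_gt0 : 0 < lam.
Proof.
have : 0 <= lam * \sum_x deg R e x * f x ^+ 2.
  rewrite -sum_deg_sGamma_eigen sumr_ge0 // => x _.
  exact: mulr_ge0 (deg_ge0 _ e _) (sGamma_ge0 f _ sig).
by rewrite pmulr_lge0 ?sum_deg_sq_gt0 // le_eqVlt eq_sym (negbTE lam_neq0).
Qed.

Lemma CDs_lichnerowicz K N : CDs e sigma K N -> K <= lam * (1 - invN N).
Proof.
move=> CD; set S := \sum_x deg R e x * f x ^+ 2.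
have CD_sum : \sum_x deg R e x * (invN N * slap e sigma f x ^+ 2 + K * Gf x)
              <= \sum_x deg R e x * Gf2 x.
  by apply: ler_sum => x _; rewrite ler_wpM2l ?deg_ge0 ?CD.
move: CD_sum; rewrite sum_deg_sGamma2_eigen.
rewrite (eq_bigr (fun x => invN N * lam ^+ 2 * (deg R e x * f x ^+ 2)
                           + K * (deg R e x * Gf x))); last first.
  by move=> x _; rewrite slap_f; ring.
rewrite big_split /= -!mulr_sumr sum_deg_sGamma_eigen -/S => ineq.
have lamS : 0 < lam * S by rewrite mulr_gt0 ?eigenvalue_gt0 ?sum_deg_sq_gt0.
rewrite -subr_ge0 -(pmulr_lge0 _ lamS).
have -> : (lam * (1 - invN N) - K) * (lam * S)
          = lam ^+ 2 * S - (invN N * lam ^+ 2 * S + K * (lam * S)) by ring.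
by rewrite subr_ge0.
Qed.

End Eigenfunction.

Section GradientBoundCoefficient.
Variables (R : realFieldType) (K lam n alpha : R).
Hypotheses (lam_gt0 : 0 < lam) (alpha_gt : 2 - 2 * K / lam < alpha).

Lemma gradient_bound_denom_gt0 : 0 < (alpha - 2) * lam + 2 * K.
Proof.
have -> : (alpha - 2) * lam + 2 * K = lam * (alpha - (2 - 2 * K / lam)).
  by field; rewrite lt0r_neq0.
by rewrite mulr_gt0 // subr_gt0.
Qed.

Lemma gradient_bound_numer_ge0 :
  0 <= n -> K <= lam * (1 - n) -> 0 <= (alpha ^+ 2 - 4 * n) * lam + 2 * K * alpha.
Proof.
move=> n_ge0 K_le; set k := K / lam.
have K_eq : K = k * lam by rewrite /k divfK ?lt0r_neq0.
have k_le : k <= 1 - n by rewrite /k ler_pdivrMr // mulrC.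
have alpha_gtk : 2 - 2 * k < alpha by rewrite /k mulrA.
have prod_ge0 : 0 <= alpha * (alpha + 2 * k - 2) by apply: mulr_ge0; lra.
have -> : (alpha ^+ 2 - 4 * n) * lam + 2 * K * alpha
        = lam * (alpha * (alpha + 2 * k - 2) + 2 * (alpha - 2 * n)) by rewrite K_eq; ring.
by rewrite pmulr_rge0 //; lra.
Qed.

End GradientBoundCoefficient.

Theorem theorem3p1 (R : realFieldType) (T : finType) (e : rel T)
  (sigma : T -> T -> R) (K : R) (N : \bar R) (f : T -> R) (lam : R) :
  simple_connected_graph e ->
  signature e sigma ->
  (0 < N)%E ->
  CDs e sigma K N ->
  (exists z, f z != 0) ->
  lam != 0 ->
  (forall x, - slap e sigma f x = lam * f x) ->
  forall (x : T) (alpha : R), 2 - 2 * K / lam < alpha ->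
    sgrad2 e sigma f x + alpha * lam * f x ^+ 2 <=
      ((alpha ^+ 2 - 4 * invN N) * lam + 2 * K * alpha)
        / ((alpha - 2) * lam + 2 * K) * lam
        * \big[Num.max/0]_(z : T) (f z ^+ 2).
Proof.
move=> [sym_e _ _] sig N_gt0 CD f_neq0 lam_neq0 eig x alpha alpha_gt.
have slap_f y : slap e sigma f y = - lam * f y by rewrite -[LHS]opprK eig mulNr.
have lam_gt0 := eigenvalue_gt0 slap_f sym_e sig f_neq0 lam_neq0.
have D_gt0 := gradient_bound_denom_gt0 lam_gt0 alpha_gt.
have Num_ge0 := gradient_bound_numer_ge0 lam_gt0 alpha_gt (invN_ge0 N_gt0)
  (CDs_lichnerowicz slap_f sym_e sig f_neq0 lam_neq0 CD).
set Num := (alpha ^+ 2 - 4 * invN N) * lam + 2 * K * alpha in Num_ge0 *.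
set D := (alpha - 2) * lam + 2 * K in D_gt0 *.
set F := fun y => sgrad2 e sigma f y + alpha * lam * f y ^+ 2.
pose x0 := [arg max_(i > x) F i]%O.
have F_max y : F y <= F x0 by rewrite /x0; case: arg_maxP => // i _; apply.
have := eigen_gradient_bound_at slap_f CD (lap_le0_at_max e F_max).
rewrite -/Num -/D -ler_pdivlMr // => F_x0_le.
apply: le_trans (F_max x) (le_trans F_x0_le _).
have -> : lam * f x0 ^+ 2 * Num / D = Num / D * lam * f x0 ^+ 2 by ring.
by rewrite ler_wpM2l ?le_bigmax // mulr_ge0 ?divr_ge0 ?(ltW D_gt0) ?(ltW lam_gt0).
Qed.
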